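(* Let $\mathcal{D}$ be a dome over a convex polygon $P$ lying in the $xy$-plane with the dome above it. Let $b_i$ be a vertex of $P$ with interior angle at least $120^\circ$, with incident dome triangles $t_1, t_2, t_3$ in order around $b_i$, where $t_1$ and $t_3$ are incident to the two edges of $P$ at $b_i$. If $t_1$ has a downward normal, then $t_1$ is not coplanar with $t_2$, and hence the face of $\mathcal{D}$ containing $t_1$ has face angle $60^\circ$ at $b_i$.
   Context: All equilateral triangles have unit edge length. A polyiamond is a polygon that is a union of unit equilateral triangles. A dome over a convex polygon $P$ is the surface consisting of all faces other than $P$ of a convex polyhedron that has $P$ as one face and all of whose other faces are convex polyiamonds; the dome triangles are the unit triangles composing the dome's faces. A triangle or face has a downward (upward) normal if its outward normal has negative (positive) $z$-component. *)

From HB Require Import structures.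
From mathcomp Require Import all_boot all_order all_algebra.
From mathcomp Require Import all_classical all_reals all_analysis.
Set Implicit Arguments. Unset Strict Implicit. Unset Printing Implicit Defensive.
Import Order.TTheory GRing.Theory Num.Theory.
Local Open Scope classical_set_scope.
Local Open Scope ring_scope.

Section Dome.
Variable R : realType.

Definition pt3 := 'rV[R]_3.
Definition cx (p : pt3) : R := p ord0 (@Ordinal 3 0 isT).
Definition cy (p : pt3) : R := p ord0 (@Ordinal 3 1 isT).
Definition cz (p : pt3) : R := p ord0 (@Ordinal 3 2 isT).

Definition dot (u v : pt3) : R := \sum_(i < 3) u ord0 i * v ord0 i.
Definition vnorm (u : pt3) : R := Num.sqrt (dot u u).
Definition vangle (u v : pt3) : R := acos (dot u v / (vnorm u * vnorm v)).

Definition cross (u v : pt3) : pt3 :=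
  \row_(i < 3)
    (if val i == 0%N then cy u * cz v - cz u * cy v
     else if val i == 1%N then cz u * cx v - cx u * cz v
     else cx u * cy v - cy u * cx v).

Definition cross2 (u v : pt3) : R := cx u * cy v - cy u * cx v.

Definition conv (S : set pt3) : set pt3 :=
  [set x | exists (n : nat) (w : 'I_n -> R) (p : 'I_n -> pt3),
     (forall i, 0 <= w i) /\ \sum_(i < n) w i = 1 /\ (forall i, S (p i)) /\
     x = \sum_(i < n) w i *: p i].

Definition noncollinear (a b c : pt3) : Prop := cross (b - a) (c - a) != 0.
Definition two_dim (F : set pt3) : Prop :=
  exists a b c, F a /\ F b /\ F c /\ noncollinear a b c.

Definition is_face (Q F : set pt3) : Prop :=
  exists (n : pt3) (c : R), n != 0 /\ (forall x, Q x -> dot n x <= c) /\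
    F = Q `&` [set x | dot n x = c] /\ two_dim F.

Definition has_interior (Q : set pt3) : Prop :=
  exists x e, 0 < e /\ forall y, vnorm (y - x) < e -> Q y.

Definition triangle := (pt3 * pt3 * pt3)%type.
Definition tverts (t : triangle) : set pt3 :=
  [set x | x = t.1.1 \/ x = t.1.2 \/ x = t.2].
Definition tregion (t : triangle) : set pt3 := conv (tverts t).
Definition unit_triangle (t : triangle) : Prop :=
  vnorm (t.1.2 - t.1.1) = 1 /\ vnorm (t.2 - t.1.2) = 1 /\ vnorm (t.1.1 - t.2) = 1.
(* interiors disjoint: the overlap has zero area *)
Definition int_disjoint (t t' : triangle) : Prop :=
  ~ two_dim (tregion t `&` tregion t').

(* convex polygon given by its vertices b_0, ..., b_{n-1} (indices mod n),
   counterclockwise, in the plane z = 0 *)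
Definition bnth (bs : seq pt3) (i : nat) : pt3 := nth 0 bs (i %% size bs).
Definition convex_polygon (bs : seq pt3) : Prop :=
  (3 <= size bs)%N /\ (forall p, p \in bs -> cz p = 0) /\
  forall i j, (i < size bs)%N -> (j < size bs)%N -> j != i ->
    j != (i.+1 %% size bs)%N ->
    0 < cross2 (bnth bs i.+1 - bnth bs i) (bnth bs j - bnth bs i).
Definition polyregion (bs : seq pt3) : set pt3 := conv [set p | p \in bs].

(* a dome: the polygon P = bs and the dome faces, each given as the list of
   unit triangles composing it *)
Definition faceU (F : seq triangle) : set pt3 :=
  [set x | exists t, t \in F /\ tregion t x].
Definition dome_points (bs : seq pt3) (faces : seq (seq triangle)) : set pt3 :=
  [set p | p \in bs \/ exists F t, F \in faces /\ t \in F /\ tverts t p].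
Definition domeQ bs faces : set pt3 := conv (dome_points bs faces).

Definition is_dome (bs : seq pt3) (faces : seq (seq triangle)) : Prop :=
  let Q := domeQ bs faces in
  convex_polygon bs /\ has_interior Q /\
  (forall x, Q x -> 0 <= cz x) /\
  is_face Q (polyregion bs) /\
  (forall F, F \in faces ->
     is_face Q (faceU F) /\ faceU F <> polyregion bs /\ uniq F /\
     (forall t, t \in F -> unit_triangle t) /\
     (forall t t', t \in F -> t' \in F -> t <> t' -> int_disjoint t t')) /\
  (forall F G, F \in faces -> G \in faces -> faceU F = faceU G -> F = G) /\
  (forall G, is_face Q G -> G = polyregion bs \/ exists F, F \in faces /\ G = faceU F).

Definition dome_triangle (faces : seq (seq triangle)) (t : triangle) : Prop :=
  exists F, F \in faces /\ t \in F.

(* t and t' share an edge b v emanating from b *)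
Definition shares_edge_at (b : pt3) (t t' : triangle) : Prop :=
  exists v, v != b /\ tverts t v /\ tverts t' v.

Definition along (t : triangle) (b q : pt3) : Prop :=
  exists v k, tverts t v /\ 0 < k /\ v - b = k *: (q - b).

Definition outward_normal (Q : set pt3) (t : triangle) (n : pt3) : Prop :=
  n != 0 /\ dot n (t.1.2 - t.1.1) = 0 /\ dot n (t.2 - t.1.1) = 0 /\
  forall x, Q x -> dot n (x - t.1.1) <= 0.
Definition downward (Q : set pt3) (t : triangle) : Prop :=
  exists n, outward_normal Q t n /\ cz n < 0.

Definition coplanar (t t' : triangle) : Prop :=
  exists (n : pt3) (c : R), n != 0 /\
    forall x, tverts t x \/ tverts t' x -> dot n x = c.

Definition face_angle (F : set pt3) (b : pt3) : R :=
  sup [set a | exists x y, F x /\ F y /\ x != b /\ y != b /\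
                 a = vangle (x - b) (y - b)].

End Dome.

(* Put the corner b_i at the origin and let p and f be the unit edges of t1
   and t3 along the two sides of P, and r the other edge of t1 at b_i.  Then
   p.r = 1/2, p.f <= -1/2, and r rises (no dome face is horizontal).  Since
   the supporting plane of t1 has a downward normal and keeps f on its inner
   side, it leans away from f, which gives r.f <= p.f / 2.  If t2 were
   coplanar with t1, the edge of t2 shared with t3 would be a unit vector of
   that plane at 60 degrees from p or r, hence one of p, r, r - p; none of
   these is at 60 degrees from f.  Next, t2 cannot share the edge along p: in
   the cross-section orthogonal to p its supporting plane would be forced to
   be horizontal.  So t2 shares the edge along r, and the supporting planes of
   t1 and t2 confine the face of t1 to the cone spanned by p and r, whose
   angle of 60 degrees is attained by t1 itself. *)

From Pilot Require Import Defs.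
From HB Require Import structures.
From mathcomp Require Import all_boot all_order all_algebra.
From mathcomp Require Import all_classical all_reals all_analysis.
From mathcomp Require Import ring lra zify.
Import Order.TTheory GRing.Theory Num.Theory.
Local Open Scope classical_set_scope.
Local Open Scope ring_scope.
Set Implicit Arguments. Unset Strict Implicit. Unset Printing Implicit Defensive.

Section Coordinates.
Variable R : realType.
Implicit Types (u v w m y : pt3 R) (k : R).

Lemma cxD u v : cx (u + v) = cx u + cx v. Proof. by rewrite /cx mxE. Qed.
Lemma cyD u v : cy (u + v) = cy u + cy v. Proof. by rewrite /cy mxE. Qed.
Lemma czD u v : cz (u + v) = cz u + cz v. Proof. by rewrite /cz mxE. Qed.
Lemma cxN u : cx (- u) = - cx u. Proof. by rewrite /cx mxE. Qed.
Lemma cyN u : cy (- u) = - cy u. Proof. by rewrite /cy mxE. Qed.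
Lemma czN u : cz (- u) = - cz u. Proof. by rewrite /cz mxE. Qed.
Lemma cxZ k u : cx (k *: u) = k * cx u. Proof. by rewrite /cx mxE. Qed.
Lemma cyZ k u : cy (k *: u) = k * cy u. Proof. by rewrite /cy mxE. Qed.
Lemma czZ k u : cz (k *: u) = k * cz u. Proof. by rewrite /cz mxE. Qed.
Lemma cx0 : cx (0 : pt3 R) = 0. Proof. by rewrite /cx mxE. Qed.
Lemma cy0 : cy (0 : pt3 R) = 0. Proof. by rewrite /cy mxE. Qed.
Lemma cz0 : cz (0 : pt3 R) = 0. Proof. by rewrite /cz mxE. Qed.
Lemma cx_cross u v : cx (cross u v) = cy u * cz v - cz u * cy v.
Proof. by rewrite {1}/cx mxE. Qed.
Lemma cy_cross u v : cy (cross u v) = cz u * cx v - cx u * cz v.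
Proof. by rewrite {1}/cy mxE. Qed.
Lemma cz_cross u v : cz (cross u v) = cx u * cy v - cy u * cx v.
Proof. by rewrite {1}/cz mxE. Qed.

Definition coordE := (cxD, cyD, czD, cxN, cyN, czN, cxZ, cyZ, czZ, cx0, cy0, cz0,
  cx_cross, cy_cross, cz_cross).

Lemma pt3P u v : cx u = cx v -> cy u = cy v -> cz u = cz v -> u = v.
Proof.
move=> ex ey ez; apply/matrixP => i [[|[|[|j]]] lt_j3] //; rewrite [i]ord1.
- by move: ex; rewrite /cx; congr (_ = _); congr (_ _ _); apply: val_inj.
- by move: ey; rewrite /cy; congr (_ = _); congr (_ _ _); apply: val_inj.
- by move: ez; rewrite /cz; congr (_ = _); congr (_ _ _); apply: val_inj.
Qed.

Lemma dotE u v : dot u v = cx u * cx v + cy u * cy v + cz u * cz v.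
Proof.
rewrite /dot !big_ord_recl big_ord0 addr0 /cx /cy /cz addrA.
by congr (_ * _ + _ * _ + _ * _); congr (_ _ _); apply: val_inj.
Qed.

Lemma dotC u v : dot u v = dot v u.
Proof. by rewrite !dotE; ring. Qed.

Lemma dotBr u v w : dot u (v - w) = dot u v - dot u w.
Proof. by rewrite !dotE !coordE; ring. Qed.

Lemma dotZl k u v : dot (k *: u) v = k * dot u v.
Proof. by rewrite !dotE !coordE; ring. Qed.

Lemma dotDZr u v w k k' : dot u (k *: v + k' *: w) = k * dot u v + k' * dot u w.
Proof. by rewrite !dotE !coordE; ring. Qed.

Lemma dotDZl u v w k k' : dot (k *: v + k' *: w) u = k * dot v u + k' * dot w u.
Proof. by rewrite dotC dotDZr !(dotC u). Qed.

Lemma dotBB u v w : dot (u - w) (u - w) =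
  dot (u - v) (u - v) - 2 * dot (u - v) (w - v) + dot (w - v) (w - v).
Proof. by rewrite !dotE !coordE; ring. Qed.

Lemma dot_ge0 u : 0 <= dot u u.
Proof. by rewrite dotE -!expr2 !addr_ge0 ?sqr_ge0. Qed.

Lemma dot_eq0 u : (dot u u == 0) = (u == 0).
Proof.
apply/idP/eqP => [|->]; last by rewrite dotE !coordE mulr0 !addr0.
rewrite dotE -!expr2 paddr_eq0 ?addr_ge0 ?sqr_ge0 // paddr_eq0 ?sqr_ge0 //.
by rewrite !sqrf_eq0 => /andP[/andP[/eqP ex /eqP ey] /eqP ez]; apply: pt3P; rewrite coordE.
Qed.

Lemma dot_gt0 u : u != 0 -> 0 < dot u u.
Proof. by rewrite lt_def dot_eq0 dot_ge0 andbT. Qed.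

Lemma dot_cross u v : dot (cross u v) (cross u v) = dot u u * dot v v - dot u v ^+ 2.
Proof. by rewrite !dotE !coordE; ring. Qed.

Lemma cross2pp u : cross2 u u = 0.
Proof. by rewrite /cross2 mulrC subrr. Qed.

Lemma cross2ZZ k k' u v : cross2 (k *: u) (k' *: v) = k * k' * cross2 u v.
Proof. by rewrite /cross2 !coordE; ring. Qed.

Lemma cross2C u v : cross2 u v = - cross2 v u.
Proof. by rewrite /cross2; ring. Qed.

Lemma cross_neq0 u v : cross2 u v != 0 -> cross u v != 0.
Proof. by apply: contraNneq => uv0; rewrite /cross2 -cz_cross uv0 cz0. Qed.

Lemma dot_cross2_sq u v : cz u = 0 -> cz v = 0 ->
  dot u v ^+ 2 + cross2 u v ^+ 2 = dot u u * dot v v.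
Proof. by move=> uz vz; rewrite !dotE /cross2 uz vz; ring. Qed.

Lemma dot_normal_vertical m u v x : cz u = 0 -> cz v = 0 -> cross2 u v != 0 ->
  dot m u = 0 -> dot m v = 0 -> dot m x = cz m * cz x.
Proof.
move=> uz vz uv0; rewrite !dotE uz vz !mulr0 !addr0 => mu mv.
have mx : cx m * cross2 u v =
    cy v * (cx m * cx u + cy m * cy u) - cy u * (cx m * cx v + cy m * cy v).
  by rewrite /cross2; ring.
have my : cy m * cross2 u v =
    cx u * (cx m * cx v + cy m * cy v) - cx v * (cx m * cx u + cy m * cy u).
  by rewrite /cross2; ring.
rewrite mu mv !mulr0 subrr in mx my.
move/eqP: mx; move/eqP: my; rewrite !mulf_eq0 (negPf uv0) !orbF => /eqP -> /eqP ->.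
by rewrite !mul0r !add0r.
Qed.

(* Coordinates in the orthonormal frame formed by the horizontal unit vector [p],
   its horizontal normal and the vertical. *)
Lemma dot_horizontal_decomp p u v : cz p = 0 -> dot p p = 1 ->
  dot u v = dot u p * dot p v + cross2 p u * cross2 p v + cz u * cz v.
Proof.
move=> pz; rewrite !dotE /cross2 pz => pp; apply/eqP; rewrite -subr_eq0; apply/eqP.
transitivity ((1 - (cx p * cx p + cy p * cy p + 0 * 0)) * (cx u * cx v + cy u * cy v)).
  by ring.
by rewrite pp subrr mul0r.
Qed.

Lemma cross_rejection p r m : let N := cross p r in
  dot N N *: m - dot m N *: N = dot m r *: cross N p - dot m p *: cross N r.
Proof. by apply: pt3P; rewrite !dotE !coordE; ring. Qed.

Lemma cross_decomp p r y : let N := cross p r in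
  dot N N *: y = dot (cross y r) N *: p + dot (cross p y) N *: r + dot y N *: N.
Proof. by apply: pt3P; rewrite !dotE !coordE; ring. Qed.

Lemma orthogonal_in_span p r m y : cross p r != 0 -> m != 0 ->
  dot m p = 0 -> dot m r = 0 -> dot m y = 0 -> exists al be, y = al *: p + be *: r.
Proof.
move=> N0 m0 mp mr my; set N := cross p r.
have NN0 : dot N N != 0 by rewrite dot_eq0.
have mN : dot N N *: m = dot m N *: N.
  by apply/eqP; rewrite -subr_eq0 cross_rejection mp mr !scale0r subrr.
have mN0 : dot m N != 0.
  by apply: contraNneq m0 => mN0; move/eqP: mN; rewrite mN0 scale0r scaler_eq0 (negPf NN0).
have yN : dot y N = 0.
  have := congr1 (fun w => dot w y) mN; rewrite !dotZl my mulr0 (dotC N) => /esym/eqP.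
  by rewrite mulf_eq0 (negPf mN0) => /eqP.
exists (dot (cross y r) N / dot N N), (dot (cross p y) N / dot N N).
apply: (scalerI NN0); rewrite cross_decomp yN scale0r addr0 scalerDr !scalerA.
by rewrite !(mulrC (dot N N)) !divfK.
Qed.

Lemma vnorm_dot u : vnorm u = 1 -> dot u u = 1.
Proof. by rewrite /vnorm => u1; rewrite -(sqr_sqrtr (dot_ge0 u)) u1 expr1n. Qed.

Lemma vnorm_unit u : dot u u = 1 -> vnorm u = 1.
Proof. by rewrite /vnorm => ->; rewrite sqrtr1. Qed.

Lemma vnormZ k u : 0 < k -> vnorm (k *: u) = k * vnorm u.
Proof.
move=> k0; rewrite /vnorm dotZl dotC dotZl mulrA -expr2.
by rewrite sqrtrM ?sqr_ge0 // sqrtr_sqr gtr0_norm.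
Qed.

Lemma vangleZ k k' u v : 0 < k -> 0 < k' -> vangle (k *: u) (k' *: v) = vangle u v.
Proof.
move=> k0 k'0; rewrite /vangle !vnormZ // dotZl dotC dotZl dotC.
have kk'0 : k * k' != 0 by rewrite mulf_neq0 // gt_eqF.
by rewrite mulrA mulrACA invfM mulrACA divff // mul1r.
Qed.

Lemma vangleC u v : vangle u v = vangle v u.
Proof. by rewrite /vangle dotC [vnorm u * _]mulrC. Qed.

End Coordinates.

Section Acos.
Variable R : realType.
Implicit Types x y : R.

Lemma cos_pi3 : cos (pi / 3 : R) = 1 / 2.
Proof.
set x : R := pi / 3.
have pi_3x : (pi : R) = x + x + x by rewrite /x; field.
have := @cospi R; rewrite pi_3x !cosD sinD.
have s2c2 := sin2cos2 x.
have cx_gt0 : 0 < cos x.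
  by apply: cos_gt0_pihalf; have := @pi_gt0 R; rewrite /x => ?; apply/andP; split; lra.
set c := cos x in s2c2 cx_gt0 *; set s := sin x in s2c2 *.
move=> cos3x.
have : (c + 1) * (2 * c - 1) ^+ 2 = 0.
  transitivity ((c * c - s * s) * c - (s * c + c * s) * s + 1
                + 3 * c * (s ^+ 2 - (1 - c ^+ 2))); first by ring.
  by rewrite cos3x s2c2 subrr; ring.
move/eqP; rewrite mulf_eq0 sqrf_eq0 => /orP[|] /eqP; lra.
Qed.

Lemma acos_half : acos (1 / 2) = pi / 3 :> R.
Proof.
rewrite -cos_pi3 cosK // in_itv /=; have := @pi_gt0 R => ?.
by apply/andP; split; lra.
Qed.

Lemma acos_lt x y : -1 <= x <= 1 -> -1 <= y <= 1 -> x < y -> acos y < acos x.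
Proof.
move=> x11 y11 xy.
have acos_x : acos x \in `[0, pi] by rewrite in_itv /= acos_ge0 // acos_lepi.
have acos_y : acos y \in `[0, pi] by rewrite in_itv /= acos_ge0 // acos_lepi.
by rewrite -(ltr_cos acos_y acos_x) !acosK.
Qed.

Lemma acos_le x y : -1 <= x <= 1 -> -1 <= y <= 1 -> x <= y -> acos y <= acos x.
Proof.
move=> x11 y11; rewrite le_eqVlt => /orP[/eqP -> //|xy].
exact/ltW/acos_lt.
Qed.

Lemma acos_ge_2pi3 x : -1 <= x <= 1 -> 2 * pi / 3 <= acos x -> x <= - (1 / 2).
Proof.
move=> x11 acos_x; rewrite leNgt; apply/negP => lt_x.
have : acos x < acos (- (1 / 2)) by apply: acos_lt => //; apply/andP; split; lra.
by rewrite acosN ?acos_half; [lra | apply/andP; split; lra].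
Qed.

Lemma vangle_ge_2pi3 (u v : pt3 R) : dot u u = 1 -> dot v v = 1 ->
  2 * pi / 3 <= vangle u v -> dot u v <= - (1 / 2).
Proof.
move=> uu vv; rewrite /vangle !vnorm_unit // mulr1 divr1; apply: acos_ge_2pi3.
have := dot_ge0 (cross u v); rewrite dot_cross uu vv mul1r subr_ge0 -ler_sqrt ?sqr_ge0 //.
by rewrite sqrtr1 sqrtr_sqr -ler_norml.
Qed.

End Acos.

Section PlaneGeometry.
Variable R : realType.
Implicit Types (p r f g n m u v X : pt3 R) (al be : R).

Lemma dot_cone al be p r : dot p p = 1 -> dot r r = 1 -> dot p r = 1 / 2 ->
  [/\ dot (al *: p + be *: r) p = al + be / 2,
      dot (al *: p + be *: r) r = al / 2 + be &
      forall al' be', dot (al *: p + be *: r) (al' *: p + be' *: r)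
                        = al * al' + be * be' + (al * be' + be * al') / 2].
Proof.
move=> pp rr pr; rewrite !dotDZl pp rr (dotC r p) pr; split; [lra|lra|] => al' be'.
by rewrite !dotDZr !dotDZl pp rr (dotC r p) pr; lra.
Qed.

(* [r - p] is the edge of the unit triangle adjacent to the triangle [p, r]
   along [r]. *)
Lemma unit_at_60deg p r X al be : dot p p = 1 -> dot r r = 1 -> dot p r = 1 / 2 ->
  X = al *: p + be *: r -> 0 <= be -> dot X X = 1 ->
  dot X p = 1 / 2 \/ dot X r = 1 / 2 -> [\/ X = p, X = r | X = r - p].
Proof.
move=> pp rr pr -> be_ge0; have [-> -> ->] := dot_cone al be pp rr pr.
move=> XX [Xp|Xr].
- have al_be : al = (1 - be) / 2 by lra.
  have be1 : be = 1.
    have : be ^+ 2 = 1 by move: XX; rewrite al_be expr2; lra.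
    by move/eqP; rewrite sqrf_eq1 => /orP[] /eqP; lra.
  have al0 : al = 0 by lra.
  by apply: Or32; rewrite al0 be1 scale0r add0r scale1r.
- have al_be : al = 1 - 2 * be by lra.
  have : be * (be - 1) = 0 by move: XX; rewrite al_be; lra.
  move/eqP; rewrite mulf_eq0 => /orP[] /eqP be01.
  + by apply: Or31; rewrite al_be be01 scale0r addr0 mulr0 subr0 scale1r.
  + have be1 : be = 1 by lra.
    apply: Or33; rewrite al_be be1 scale1r addrC (_ : 1 - 2 * 1 = -1) ?scaleN1r //.
    by lra.
Qed.

Lemma dot_horizontal_normal p n u : cz p = 0 -> dot p p = 1 -> dot n p = 0 ->
  dot n u = cross2 p n * cross2 p u + cz n * cz u.
Proof. by move=> pz pp np; rewrite (dot_horizontal_decomp n u pz pp) np mul0r add0r. Qed.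

(* A plane through [p] and the rising [r] with downward normal [n], keeping [f]
   on its inner side, leans away from [f]; equality holds when it is vertical. *)
Lemma tilted_dot_le p r f n : cz p = 0 -> dot p p = 1 -> dot p r = 1 / 2 ->
  cz f = 0 -> 0 < cz r -> cz n < 0 -> dot n p = 0 -> dot n r = 0 -> dot n f <= 0 ->
  dot r f <= dot p f / 2.
Proof.
move=> pz pp pr fz rz nz np nr nf.
have nE := dot_horizontal_normal _ pz pp np.
move: nr nf; rewrite !nE fz mulr0 addr0.
set mu := cross2 p n; set sg := cross2 p r; set tau := cross2 p f => nr mutau.
have musg : 0 < mu * sg by nra.
have sgtau : sg * tau <= 0.
  have mu0 : mu != 0 by apply: contraTneq musg => ->; rewrite mul0r ltxx.
  have : mu ^+ 2 * (sg * tau) <= 0.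
    have -> : mu ^+ 2 * (sg * tau) = (mu * sg) * (mu * tau) by ring.
    by rewrite pmulr_rle0.
  by rewrite pmulr_rle0 // exprn_even_gt0.
by rewrite (dot_horizontal_decomp r f pz pp) (dotC r p) pr fz mulr0 addr0 -/sg -/tau; lra.
Qed.

(* The cross-section orthogonal to an edge, in (horizontal, vertical)
   coordinates: lines with outward normals [(mu, nz)] through the rising ray
   [(sg, rz)] and [(mu2, nz2)] through the ray [(sg2, gz)], which is strictly
   inside the first, support a cone of the upper half-plane containing the
   horizontal ray [(tau, 0)]; then [(sg2, gz)] is horizontal. *)
Lemma cross_section_boundary (mu nz sg rz tau sg2 gz mu2 nz2 : R) :
  mu * sg + nz * rz = 0 -> mu * tau <= 0 -> mu * sg2 + nz * gz < 0 ->
  mu2 * sg2 + nz2 * gz = 0 -> mu2 * sg + nz2 * rz <= 0 -> mu2 * tau <= 0 ->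
  0 < mu2 ^+ 2 + nz2 ^+ 2 -> tau != 0 -> 0 < rz -> 0 <= gz -> nz < 0 ->
  gz = 0 /\ sg2 != 0.
Proof.
move=> nr nf ng n2g n2r n2f n2_neq0 tau0 rz_gt0 gz_ge0 nz_lt0.
have musg : 0 < mu * sg by nra.
set D := sg2 * rz - sg * gz.
have muD : mu * D < 0.
  have -> : mu * D = rz * (mu * sg2 + nz * gz) - gz * (mu * sg + nz * rz) by rewrite /D; ring.
  by rewrite nr mulr0 subr0; nra.
have mu2D : 0 <= mu2 * D.
  have -> : mu2 * D = rz * (mu2 * sg2 + nz2 * gz) - gz * (mu2 * sg + nz2 * rz) by rewrite /D; ring.
  by rewrite n2g mulr0 sub0r; nra.
have mumu2 : mu * mu2 = 0.
  have tau2 : 0 < tau ^+ 2 by rewrite exprn_even_gt0.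
  have D2 : 0 < D ^+ 2 by rewrite exprn_even_gt0 //; apply: contraTneq muD => ->; lra.
  have : 0 <= mu * mu2 * tau ^+ 2.
    have -> : mu * mu2 * tau ^+ 2 = (mu * tau) * (mu2 * tau) by ring.
    exact: mulr_le0.
  have : mu * mu2 * D ^+ 2 <= 0.
    have -> : mu * mu2 * D ^+ 2 = (mu * D) * (mu2 * D) by ring.
    by rewrite nmulr_rle0.
  nra.
have mu2_0 : mu2 = 0.
  by move/eqP: mumu2; rewrite mulf_eq0 => /orP[] /eqP // mu0; move: musg; rewrite mu0; lra.
rewrite mu2_0 mul0r add0r in n2g n2_neq0.
have nz2_0 : nz2 != 0 by apply: contraTneq n2_neq0 => ->; lra.
have gz0 : gz = 0 by move/eqP: n2g; rewrite mulf_eq0 (negPf nz2_0) => /eqP.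
by split=> //; apply: contraTneq ng => ->; rewrite gz0; lra.
Qed.

Lemma edge_neighbour_horizontal p r f g n n2 :
  cz p = 0 -> dot p p = 1 -> cz f = 0 -> cross2 p f != 0 -> 0 < cz r -> 0 <= cz g ->
  cz n < 0 -> dot n p = 0 -> dot n r = 0 -> dot n f <= 0 -> dot n g < 0 ->
  n2 != 0 -> dot n2 p = 0 -> dot n2 g = 0 -> dot n2 r <= 0 -> dot n2 f <= 0 ->
  cz g = 0 /\ cross2 p g != 0.
Proof.
move=> pz pp fz tau0 rz gz nz np nr nf ng n20 n2p n2g n2r n2f.
have nE := dot_horizontal_normal _ pz pp np.
have n2E := dot_horizontal_normal _ pz pp n2p.
move: nr nf ng n2g n2r n2f; rewrite !nE !n2E fz !mulr0 !addr0 => nr nf ng n2g n2r n2f.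
apply: (cross_section_boundary nr nf ng n2g n2r n2f _ tau0 rz gz nz).
by have := dot_gt0 n20; rewrite n2E !expr2.
Qed.

Lemma cone_coords_ge0 p r m x al be : cz p = 0 -> 0 < cz r ->
  dot m r = 0 -> dot m p < 0 -> x = al *: p + be *: r ->
  dot m x <= 0 -> 0 <= cz x -> 0 <= al /\ 0 <= be.
Proof.
move=> pz rz mr mp -> mx xz; move: mx xz.
rewrite dotDZr mr mulr0 addr0 czD !czZ pz mulr0 add0r => mx xz; split; nra.
Qed.

Lemma cone_cos_bounds (a b a' b' : R) : 0 <= a -> 0 <= b -> 0 <= a' -> 0 <= b' ->
  0 < a ^+ 2 + b ^+ 2 + a * b -> 0 < a' ^+ 2 + b' ^+ 2 + a' * b' ->
  1 / 2 <= (a * a' + b * b' + (a * b' + b * a') / 2) /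
    (Num.sqrt (a ^+ 2 + b ^+ 2 + a * b) * Num.sqrt (a' ^+ 2 + b' ^+ 2 + a' * b')) <= 1.
Proof.
move=> a0 b0 a'0 b'0 X0 Y0.
set D := _ + (_ / 2); set S := Num.sqrt _ * Num.sqrt _.
have S0 : 0 < S by rewrite mulr_gt0 // sqrtr_gt0.
have SS : S ^+ 2 = (a ^+ 2 + b ^+ 2 + a * b) * (a' ^+ 2 + b' ^+ 2 + a' * b').
  by rewrite exprMn !sqr_sqrtr // ltW.
have D0 : 0 <= D by rewrite /D; nra.
have SD : S ^+ 2 <= 4 * D ^+ 2.
  have -> : 4 * D ^+ 2 = S ^+ 2 + 3 * (a * a' + b * b' + b * a') * (a * a' + b * b' + a * b').
    by rewrite SS /D; field.
  by rewrite lerDl !mulr_ge0 //; nra.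
have DS : D ^+ 2 <= S ^+ 2.
  have -> : S ^+ 2 = D ^+ 2 + 3 / 4 * (a * b' - b * a') ^+ 2 by rewrite SS /D; field.
  by rewrite lerDl mulr_ge0 ?sqr_ge0.
rewrite ler_pdivlMr // ler_pdivrMr //; rewrite !expr2 in SD DS; apply/andP; split; nra.
Qed.

Lemma vangle_cone_le p r al be al' be' : dot p p = 1 -> dot r r = 1 -> dot p r = 1 / 2 ->
  0 <= al -> 0 <= be -> 0 <= al' -> 0 <= be' ->
  al *: p + be *: r != 0 -> al' *: p + be' *: r != 0 ->
  vangle (al *: p + be *: r) (al' *: p + be' *: r) <= pi / 3.
Proof.
move=> pp rr pr al0 be0 al'0 be'0 X0 Y0.
have [_ _ dX] := dot_cone al be pp rr pr; have [_ _ dY] := dot_cone al' be' pp rr pr.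
have nX : dot (al *: p + be *: r) (al *: p + be *: r) = al ^+ 2 + be ^+ 2 + al * be.
  by rewrite dX; field.
have nY : dot (al' *: p + be' *: r) (al' *: p + be' *: r) = al' ^+ 2 + be' ^+ 2 + al' * be'.
  by rewrite dY; field.
have := dot_gt0 X0; have := dot_gt0 Y0; rewrite /vangle /vnorm nX nY dX => Y_gt0 X_gt0.
have /andP[cos_ge cos_le] := cone_cos_bounds al0 be0 al'0 be'0 X_gt0 Y_gt0.
by rewrite -acos_half; apply: acos_le => //; apply/andP; split; lra.
Qed.

Lemma face_angle_max (F : set (pt3 R)) b x y : F x -> F y -> x != b -> y != b ->
  (forall x' y', F x' -> F y' -> x' != b -> y' != b ->
     vangle (x' - b) (y' - b) <= vangle (x - b) (y - b)) ->
  face_angle F b = vangle (x - b) (y - b).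
Proof.
move=> Fx Fy xb yb max_xy; rewrite /face_angle; set S := (X in sup X).
have Sxy : S (vangle (x - b) (y - b)) by exists x, y.
have ubS : ubound S (vangle (x - b) (y - b)).
  by move=> _ [x' [y' [Fx' [Fy' [x'b [y'b ->]]]]]]; apply: max_xy.
apply/le_anti/andP; split; first by apply: ge_sup => //; exists (vangle (x - b) (y - b)).
by apply: ub_le_sup Sxy; exists (vangle (x - b) (y - b)).
Qed.

End PlaneGeometry.

Section Faces.
Variable R : realType.
Implicit Types (Q F : set (pt3 R)) (x : pt3 R).

Lemma conv_sub (S : set (pt3 R)) x : S x -> Defs.conv S x.
Proof.
move=> Sx; exists 1%N, (fun _ => 1), (fun _ => x).
by rewrite !big_ord1 scale1r.
Qed.

Lemma is_faceP Q F : is_face Q F ->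
  exists n c, [/\ n != 0, forall x, Q x -> dot n x <= c & forall x, F x <-> Q x /\ dot n x = c].
Proof. by move=> [n [c [n0 [Qc [-> _]]]]]; exists n, c; split. Qed.

Lemma face_plane_sub Q n1 c1 n2 c2 x0 x1 x2 :
  n1 != 0 -> cross (x1 - x0) (x2 - x0) != 0 ->
  dot n1 x0 = c1 -> dot n1 x1 = c1 -> dot n1 x2 = c1 ->
  dot n2 x0 = c2 -> dot n2 x1 = c2 -> dot n2 x2 = c2 ->
  Q `&` [set x | dot n1 x = c1] `<=` Q `&` [set x | dot n2 x = c2].
Proof.
move=> n10 x012 n1x0 n1x1 n1x2 n2x0 n2x1 n2x2 x [Qx /= n1x]; split => //=.
have [al [be x_span]] : exists al be, x - x0 = al *: (x1 - x0) + be *: (x2 - x0).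
  by apply: (orthogonal_in_span x012 n10); rewrite dotBr ?n1x0 ?n1x1 ?n1x2 ?n1x subrr.
have : dot n2 (x - x0) = 0.
  by rewrite x_span dotDZr !dotBr n2x0 n2x1 n2x2 subrr !mulr0 addr0.
by rewrite dotBr n2x0 => /eqP; rewrite subr_eq0 => /eqP.
Qed.

Lemma face_eq Q F1 F2 x0 x1 x2 : is_face Q F1 -> is_face Q F2 ->
  F1 x0 -> F1 x1 -> F1 x2 -> F2 x0 -> F2 x1 -> F2 x2 ->
  cross (x1 - x0) (x2 - x0) != 0 -> F1 = F2.
Proof.
move=> [n1 [c1 [n10 [_ [-> _]]]]] [n2 [c2 [n20 [_ [-> _]]]]].
move=> [_ n1x0] [_ n1x1] [_ n1x2] [_ n2x0] [_ n2x1] [_ n2x2] x012.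
apply/seteqP; split; first exact: face_plane_sub n10 x012 n1x0 n1x1 n1x2 n2x0 n2x1 n2x2.
exact: face_plane_sub n20 x012 n2x0 n2x1 n2x2 n1x0 n1x1 n1x2.
Qed.
End Faces.

Section UnitTriangles.
Variable R : realType.
Implicit Types (t : triangle R) (x y z : pt3 R).

Lemma unit_triangle_dist t x y : unit_triangle t -> tverts t x -> tverts t y ->
  x != y -> dot (x - y) (x - y) = 1.
Proof.
case: t => [[u v] w] [/= /vnorm_dot uv [/vnorm_dot vw /vnorm_dot wu]].
have sym z z' : dot (z - z') (z - z') = dot (z' - z) (z' - z).
  by rewrite !dotE !coordE; ring.
by rewrite /tverts /= => -[->|[->|->]] [->|[->|->]]; rewrite ?eqxx // => _;
  rewrite ?uv ?vw ?wu // sym ?uv ?vw ?wu.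
Qed.

Lemma unit_triangle_dot t x y z : unit_triangle t ->
  tverts t x -> tverts t y -> tverts t z -> y != x -> z != x -> y != z ->
  dot (y - x) (z - x) = 1 / 2.
Proof.
move=> ut tx ty tz yx zx yz.
have := unit_triangle_dist ut ty tz yz; rewrite (dotBB y x z).
by rewrite !(unit_triangle_dist ut) //; lra.
Qed.

Lemma unit_triangle_neq t : unit_triangle t ->
  [/\ t.1.1 != t.1.2, t.1.2 != t.2 & t.2 != t.1.1].
Proof.
have ne0 x y : vnorm (y - x) = 1 -> x != y.
  move/vnorm_dot; apply: contraPneq => ->.
  by rewrite subrr dotE !coordE !mulr0 !addr0 => /eqP; rewrite eq_sym oner_eq0.
by case=> /ne0 ? [/ne0 ? /ne0 ?].
Qed.

Lemma unit_triangle_third t x y : unit_triangle t -> tverts t x -> tverts t y ->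
  y != x -> exists z, [/\ tverts t z, z != x, z != y &
    forall w, tverts t w -> [\/ w = x, w = y | w = z]].
Proof.
case: t => [[u v] w] /unit_triangle_neq /= [uv vw wu].
have [vu wv uw] : [/\ v != u, w != v & u != w] by split; rewrite eq_sym.
rewrite /tverts /= => -[->|[->|->]] [->|[->|->]]; rewrite ?eqxx // => _;
  [exists w | exists v | exists w | exists u | exists v | exists u];
  (split => //; first tauto);
  move=> ? [|[|]] ->; first [exact: Or31 | exact: Or32 | exact: Or33].
Qed.
End UnitTriangles.

Lemma bnth_in (R : realType) (bs : seq (pt3 R)) k : (0 < size bs)%N -> bnth bs k \in bs.
Proof. by move=> bs0; rewrite /bnth mem_nth // ltn_pmod. Qed.

Section Dome.
Variables (R : realType) (bs : seq (pt3 R)) (faces : seq (seq (triangle R))).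
Local Notation Q := (domeQ bs faces).
Implicit Types (t : triangle R) (x : pt3 R).

Lemma domeQ_vertex t x : dome_triangle faces t -> tverts t x -> Q x.
Proof. by move=> [F [Ffaces tF]] tx; apply: conv_sub; right; exists F, t. Qed.

Lemma faceU_vertex (F : seq (triangle R)) t x : t \in F -> tverts t x -> faceU F x.
Proof. by move=> tF tx; exists t; split => //; apply: conv_sub. Qed.

Hypothesis dome : is_dome bs faces.

Lemma domeQ_ge0 x : Q x -> 0 <= cz x.
Proof. by case: dome => _ [_ [Qz _]]; apply: Qz. Qed.

Lemma dome_face F : F \in faces -> is_face Q (faceU F).
Proof. by case: dome => _ [_ [_ [_ [faces_ok _]]]] /faces_ok []. Qed.

Lemma dome_triangle_unit t : dome_triangle faces t -> unit_triangle t.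
Proof.
by case: dome => _ [_ [_ [_ [faces_ok _]]]] [F [/faces_ok [_ [_ [_ [unit _]]]] /unit]].
Qed.

Lemma dome_triangle_plane t : dome_triangle faces t ->
  exists m d, [/\ m != 0, forall x, Q x -> dot m x <= d & forall x, tverts t x -> dot m x = d].
Proof.
move=> [F [Ffaces tF]]; have [m [d [m0 Qm Fm]]] := is_faceP (dome_face Ffaces).
by exists m, d; split => // x tx; have [] := (Fm x).1 (faceU_vertex tF tx).
Qed.

Lemma polyregion_horizontal x : Q x -> cz x = 0 -> polyregion bs x.
Proof.
case: dome => [[size3 [bsz bs_convex]] [_ [_ [Pface _]]]] Qx xz.
have size0 : (0 < size bs)%N by apply: leq_trans size3.
have [m [d [_ _ Pm]]] := is_faceP Pface.
have Bz k : cz (bnth bs k) = 0 by apply/bsz/bnth_in.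
have mB k : dot m (bnth bs k) = d by have [] := (Pm _).1 (conv_sub (bnth_in k size0)).
have B012 : cross2 (bnth bs 1 - bnth bs 0) (bnth bs 2 - bnth bs 0) != 0.
  by rewrite gt_eqF // bs_convex // modn_small // (leq_trans _ size3).
have mE y : dot m y = cz m * cz y.
  by apply: (dot_normal_vertical y _ _ B012); rewrite ?czD ?czN ?Bz ?subrr // dotBr !mB subrr.
by apply/Pm; split => //; rewrite -(mB 0%N) !mE xz Bz.
Qed.

Lemma dome_triangle_not_horizontal t x0 x1 x2 : dome_triangle faces t ->
  tverts t x0 -> tverts t x1 -> tverts t x2 -> cz x0 = 0 -> cz x1 = 0 -> cz x2 = 0 ->
  cross2 (x1 - x0) (x2 - x0) != 0 -> False.
Proof.
move=> dt tx0 tx1 tx2 z0 z1 z2 /cross_neq0 x012.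
case: (dome) => _ [_ [_ [Pface [faces_ok _]]]]; case: (dt) => F [Ffaces tF].
have [Fface [FP _]] := faces_ok F Ffaces.
apply: FP; apply: (face_eq Fface Pface _ _ _ _ _ _ x012);
  do ?[exact: faceU_vertex tF _]; apply: polyregion_horizontal => //;
  exact: domeQ_vertex dt _.
Qed.

Section Corner.
Variables (b a c e n : pt3 R) (t1 t2 t3 : triangle R).
Hypotheses (dt1 : dome_triangle faces t1) (dt2 : dome_triangle faces t2)
  (dt3 : dome_triangle faces t3).
Hypotheses (t1b : tverts t1 b) (t1a : tverts t1 a) (t1c : tverts t1 c).
Hypothesis t1_bac : forall x, tverts t1 x -> [\/ x = b, x = a | x = c].
Hypotheses (cb : c != b) (ca : c != a).
Hypotheses (t2b : tverts t2 b) (t3b : tverts t3 b) (t3e : tverts t3 e).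
Hypotheses (t12 : shares_edge_at b t1 t2) (t23 : shares_edge_at b t2 t3).
Hypotheses (bz : cz b = 0) (az : cz a = 0) (ez : cz e = 0).
Hypothesis ae_nondeg : cross2 (a - b) (e - b) != 0.
Hypothesis obtuse : dot (a - b) (e - b) <= - (1 / 2).
Hypotheses (n_t1 : outward_normal Q t1 n) (n_down : cz n < 0).

Local Notation p := (a - b).
Local Notation r := (c - b).
Local Notation f := (e - b).

Lemma corner_neq : a != b /\ e != b.
Proof.
by split; apply: contraNneq ae_nondeg => ->; rewrite subrr /cross2 !coordE !(mul0r, mulr0) subrr.
Qed.

Lemma corner_units : [/\ dot p p = 1, dot r r = 1, dot f f = 1 & dot p r = 1 / 2].
Proof.
have [ab eb] := corner_neq.
have ut1 := dome_triangle_unit dt1; have ut3 := dome_triangle_unit dt3.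
split; [exact: unit_triangle_dist ut1 t1a t1b ab | exact: unit_triangle_dist ut1 t1c t1b cb |
        exact: unit_triangle_dist ut3 t3e t3b eb | ].
by apply: unit_triangle_dot ut1 t1b t1a t1c ab cb _; rewrite eq_sym.
Qed.

Lemma corner_pz : cz p = 0. Proof. by rewrite czD czN az bz subrr. Qed.
Lemma corner_fz : cz f = 0. Proof. by rewrite czD czN ez bz subrr. Qed.

Lemma corner_rz : 0 < cz r.
Proof.
have [pp rr _ pr] := corner_units.
have rz0 : 0 <= cz r by rewrite czD czN bz subr0; exact/domeQ_ge0/(domeQ_vertex dt1 t1c).
rewrite lt_def rz0 andbT; apply/eqP => rz.
have cz0 : cz c = 0 by move: rz; rewrite czD czN bz subr0.
apply: (dome_triangle_not_horizontal dt1 t1b t1a t1c bz az cz0).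
apply/eqP => pr0; have := dot_cross2_sq corner_pz rz.
by rewrite pr pr0 pp rr !expr2; lra.
Qed.

Lemma corner_n_t1 x : tverts t1 x -> dot n x = dot n b.
Proof.
have n_on y : tverts t1 y -> dot n y = dot n t1.1.1.
  case: n_t1 => _ [n12 [n13 _]] [->|[->|->]] //; apply/eqP; rewrite -subr_eq0 -dotBr.
    by rewrite n12.
  by rewrite n13.
by move=> t1x; rewrite !n_on.
Qed.

Lemma corner_nQ y : Q y -> dot n (y - b) <= 0.
Proof.
have t1_11 : tverts t1 t1.1.1 by left.
by case: n_t1 => _ [_ [_ nQ]] /nQ; rewrite !dotBr (corner_n_t1 t1_11).
Qed.

Lemma corner_np : dot n p = 0. Proof. by rewrite dotBr !corner_n_t1 ?subrr. Qed.
Lemma corner_nr : dot n r = 0. Proof. by rewrite dotBr !corner_n_t1 ?subrr. Qed.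

Lemma corner_rf : dot r f <= dot p f / 2.
Proof.
have [pp _ _ pr] := corner_units.
apply: (tilted_dot_le corner_pz pp pr corner_fz corner_rz n_down corner_np corner_nr).
exact/corner_nQ/(domeQ_vertex dt3 t3e).
Qed.

Lemma corner_pf_gtN1 : -1 < dot p f.
Proof.
have [pp _ ff _] := corner_units.
have := dot_cross2_sq corner_pz corner_fz; rewrite pp ff mulr1.
have : 0 < cross2 p f ^+ 2 by rewrite exprn_even_gt0.
rewrite !expr2; nra.
Qed.

Lemma corner_cross : cross p r != 0.
Proof.
have [pp rr _ pr] := corner_units.
by rewrite -dot_eq0 dot_cross pp rr pr expr2; apply/eqP; lra.
Qed.

Lemma corner_t2_a_or_c : tverts t2 a \/ tverts t2 c.
Proof.
case: t12 => v [vb [t1v t2v]].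
by case: (t1_bac t1v) => ev; [by rewrite ev eqxx in vb | left | right]; rewrite -ev.
Qed.

Lemma corner_not_coplanar : ~ coplanar t1 t2.
Proof.
move=> [m [d [m0 md]]].
have [pp rr ff pr] := corner_units; have [ab eb] := corner_neq.
have [v [vb [t2v t3v]]] := t23.
have ut2 := dome_triangle_unit dt2; have ut3 := dome_triangle_unit dt3.
have mB x : tverts t1 x \/ tverts t2 x -> dot m (x - b) = 0.
  by move=> /md mx; rewrite dotBr mx md ?subrr //; left.
have [al [be X_span]] := orthogonal_in_span corner_cross m0
  (mB a (or_introl t1a)) (mB c (or_introl t1c)) (mB v (or_intror t2v)).
have XX : dot (v - b) (v - b) = 1 := unit_triangle_dist ut2 t2v t2b vb.
have be0 : 0 <= be.
  have : cz (v - b) = be * cz r.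
    by rewrite X_span [cz (_ *: _ + _)]czD !czZ corner_pz mulr0 add0r.
  rewrite czD czN bz subr0 => vz; have := domeQ_ge0 (domeQ_vertex dt2 t2v).
  by rewrite vz pmulr_lge0 // corner_rz.
have X60 : dot (v - b) p = 1 / 2 \/ dot (v - b) r = 1 / 2.
  case: corner_t2_a_or_c => [t2a | t2c].
  - have [->|va] := eqVneq v a; first by right.
    by left; apply: unit_triangle_dot ut2 t2b t2v t2a vb ab va.
  - have [->|vc] := eqVneq v c; first by left; rewrite dotC.
    by right; apply: unit_triangle_dot ut2 t2b t2v t2c vb cb vc.
have Xf (X : pt3 R) : v - b = X -> X != f -> dot X f = 1 / 2.
  move=> <- Xf; apply: unit_triangle_dot ut3 t3b t3v t3e vb eb _.
  by apply: contraNneq Xf => ->.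
have ne_f X : 0 < cz X -> X != f.
  by move=> Xz; apply: contraTneq Xz => ->; rewrite corner_fz ltxx.
have rz := corner_rz.
move: corner_rf corner_pf_gtN1 obtuse; set P := dot p f; set Rf := dot r f => rf pf_gt pf_le.
case: (unit_at_60deg pp rr pr X_span be0 XX X60) => /Xf Xf'.
- have pf : p != f by apply: contraNneq ae_nondeg => ->; rewrite cross2pp.
  by have := Xf' pf; rewrite -/P; lra.
- by have := Xf' (ne_f _ rz); rewrite -/Rf; lra.
- have := Xf' (ne_f _ _); rewrite czD czN corner_pz subr0 => /(_ rz).
  by rewrite dotC dotBr !(dotC f) -/P -/Rf; lra.
Qed.

(* Sharing the edge along [p] instead would make [t2] horizontal. *)
Lemma corner_t2_c : tverts t2 c.
Proof.
case: corner_t2_a_or_c => // t2a; exfalso.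
have [pp _ _ _] := corner_units.
have [n2 [d2 [n20 n2Q n2t2]]] := dome_triangle_plane dt2.
have n2B x : Q x -> dot n2 (x - b) <= 0 by move=> /n2Q; rewrite dotBr (n2t2 b t2b) subr_le0.
have [g [t2g ng]] : exists g, tverts t2 g /\ dot n (g - b) != 0.
  apply: contrapT => n_t2; apply: corner_not_coplanar; exists n, (dot n b).
  split=> [|x [/corner_n_t1 //|t2x]]; first by case: n_t1.
  apply/eqP; rewrite -subr_eq0 -dotBr; apply: contrapT => /negP nx.
  by apply: n_t2; exists x.
have Qg := domeQ_vertex dt2 t2g.
have ngb : dot n (g - b) < 0 by rewrite lt_neqAle ng corner_nQ.
have gz : 0 <= cz (g - b) by rewrite czD czN bz subr0; exact: domeQ_ge0.
have n2p : dot n2 p = 0 by rewrite dotBr !n2t2 ?subrr.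
have n2g : dot n2 (g - b) = 0 by rewrite dotBr !n2t2 ?subrr.
have [gz0 pg] := edge_neighbour_horizontal corner_pz pp corner_fz ae_nondeg corner_rz gz
  n_down corner_np corner_nr (corner_nQ (domeQ_vertex dt3 t3e)) ngb n20 n2p n2g
  (n2B _ (domeQ_vertex dt1 t1c)) (n2B _ (domeQ_vertex dt3 t3e)).
apply: (dome_triangle_not_horizontal dt2 t2b t2a t2g bz az _ pg).
by move: gz0; rewrite czD czN bz subr0.
Qed.

Lemma corner_face_cone F x : F \in faces -> t1 \in F -> faceU F x ->
  exists al be, [/\ 0 <= al, 0 <= be & x - b = al *: p + be *: r].
Proof.
move=> Ffaces t1F Fx.
have [m [d [m0 _ Fm]]] := is_faceP (dome_face Ffaces).
have mB y : faceU F y -> dot m (y - b) = 0.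
  move=> Fy; have [_ my] := (Fm y).1 Fy; have [_ mb] := (Fm b).1 (faceU_vertex t1F t1b).
  by rewrite dotBr my mb subrr.
have [al [be x_span]] := orthogonal_in_span corner_cross m0
  (mB a (faceU_vertex t1F t1a)) (mB c (faceU_vertex t1F t1c)) (mB x Fx).
have [n2 [d2 [n20 n2Q n2t2]]] := dome_triangle_plane dt2.
have n2B y : Q y -> dot n2 (y - b) <= 0 by move=> /n2Q; rewrite dotBr (n2t2 b t2b) subr_le0.
have n2r : dot n2 r = 0 by rewrite dotBr (n2t2 c corner_t2_c) (n2t2 b t2b) subrr.
have n2p : dot n2 p < 0.
  rewrite lt_neqAle (n2B a (domeQ_vertex dt1 t1a)) andbT.
  apply/eqP => n2p; apply: corner_not_coplanar.
  exists n2, d2; split=> // y [t1y|]; last exact: n2t2.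
  case: (t1_bac t1y) => ->; [exact: n2t2 | | exact: n2t2 corner_t2_c].
  by move/eqP: n2p; rewrite dotBr subr_eq0 (n2t2 b t2b) => /eqP.
have Qx : Q x by have [] := (Fm x).1 Fx.
have xz : 0 <= cz (x - b) by rewrite czD czN bz subr0; exact: domeQ_ge0.
have [al0 be0] := cone_coords_ge0 corner_pz corner_rz n2r n2p x_span (n2B x Qx) xz.
by exists al, be.
Qed.

Lemma corner_face_angle F : F \in faces -> t1 \in F -> face_angle (faceU F) b = pi / 3.
Proof.
move=> Ffaces t1F; have [pp rr _ pr] := corner_units; have [ab _] := corner_neq.
have angle_pr : vangle p r = pi / 3.
  by rewrite /vangle pr !vnorm_unit // mulr1 divr1 acos_half.
rewrite -angle_pr; apply: face_angle_max => //; try exact: faceU_vertex t1F _.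
move=> x y Fx Fy xb yb; rewrite angle_pr.
have [al [be [al0 be0 ex]]] := corner_face_cone Ffaces t1F Fx.
have [al' [be' [al'0 be'0 ey]]] := corner_face_cone Ffaces t1F Fy.
by rewrite ex ey vangle_cone_le // -?ex -?ey subr_eq0.
Qed.

End Corner.

Lemma dome_corner b q1 q2 t1 t2 t3 :
  cz b = 0 -> cz q1 = 0 -> cz q2 = 0 ->
  cross2 (q1 - b) (q2 - b) != 0 -> 2 * pi / 3 <= vangle (q1 - b) (q2 - b) ->
  dome_triangle faces t1 -> dome_triangle faces t2 -> dome_triangle faces t3 ->
  tverts t1 b -> tverts t2 b -> tverts t3 b ->
  shares_edge_at b t1 t2 -> shares_edge_at b t2 t3 ->
  along t1 b q1 -> along t3 b q2 -> downward Q t1 ->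
  ~ coplanar t1 t2 /\
  (forall F, F \in faces -> t1 \in F -> face_angle (faceU F) b = pi / 3).
Proof.
move=> bz q1z q2z q12 wide dt1 dt2 dt3 t1b t2b t3b t12 t23
  [a [k [t1a [k0 ea]]]] [e [k' [t3e [k'0 ee]]]] [n [n_t1 n_down]].
have horizontal x l q : x - b = l *: (q - b) -> cz q = 0 -> cz x = 0.
  move=> exq qz; have := congr1 (@cz R) exq.
  by rewrite czZ !czD !czN bz qz oppr0 !addr0 mulr0.
have az := horizontal a k q1 ea q1z; have ez := horizontal e k' q2 ee q2z.
have ae_nondeg : cross2 (a - b) (e - b) != 0.
  by rewrite ea ee cross2ZZ !mulf_neq0 // gt_eqF.
have [ab eb] := corner_neq ae_nondeg.
have ut1 := dome_triangle_unit dt1; have ut3 := dome_triangle_unit dt3.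
have [c [t1c cb ca t1_bac]] := unit_triangle_third ut1 t1b t1a ab.
have obtuse : dot (a - b) (e - b) <= - (1 / 2).
  apply: vangle_ge_2pi3; [exact: unit_triangle_dist ut1 t1a t1b ab |
    exact: unit_triangle_dist ut3 t3e t3b eb |].
  by rewrite ea ee vangleZ.
split; first exact: (corner_not_coplanar dt1 dt2 dt3 t1b t1a t1c t1_bac cb ca t2b t3b t3e
  t12 t23 bz az ez ae_nondeg obtuse n_t1 n_down).
move=> F; exact: (corner_face_angle dt1 dt2 dt3 t1b t1a t1c t1_bac cb ca t2b t3b t3e
  t12 t23 bz az ez ae_nondeg obtuse n_t1 n_down).
Qed.
End Dome.

Lemma prev_index (s i : nat) : (2 < s)%N -> (i < s)%N ->
  [/\ ((i + s).-1 %% s < s)%N, ((i + s).-1 %% s)%N != i &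
      ((i + s).-1 %% s)%N != (i.+1 %% s)%N].
Proof.
move=> s_gt2; case: i => [|i] i_lt.
  have s_gt1 : (1 < s)%N by lia.
  by rewrite add0n !modn_small ?ltn_predL //; split; lia.
rewrite addSn /= modnDr modn_small; last lia.
split; [lia | lia |].
case: (ltngtP i.+2 s) => [?|?|s_eq].
- by rewrite modn_small //; lia.
- lia.
- by rewrite s_eq modnn; lia.
Qed.

Unset Implicit Arguments.

Theorem mainTheorem9 (R : realType) (bs : seq (pt3 R))
  (faces : seq (seq (triangle R))) (i : nat) (t1 t2 t3 : triangle R) :
  is_dome bs faces -> (i < size bs)%N ->
  2 * pi / 3 <= vangle (bnth bs (i + size bs).-1 - bnth bs i)
                       (bnth bs i.+1 - bnth bs i) ->
  dome_triangle faces t1 -> dome_triangle faces t2 -> dome_triangle faces t3 ->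
  uniq [:: t1; t2; t3] ->
  (forall t, dome_triangle faces t ->
     (tverts t (bnth bs i) <-> (t = t1 \/ t = t2 \/ t = t3))) ->
  shares_edge_at (bnth bs i) t1 t2 -> shares_edge_at (bnth bs i) t2 t3 ->
  (along t1 (bnth bs i) (bnth bs (i + size bs).-1) /\
     along t3 (bnth bs i) (bnth bs i.+1) \/
   along t1 (bnth bs i) (bnth bs i.+1) /\
     along t3 (bnth bs i) (bnth bs (i + size bs).-1)) ->
  downward (domeQ bs faces) t1 ->
  ~ coplanar t1 t2 /\
  (forall F, F \in faces -> t1 \in F -> face_angle (faceU F) (bnth bs i) = pi / 3).
Proof.
move=> dome i_lt wide dt1 dt2 dt3 _ at_b t12 t23 orientation down.
have [[size3 [bs_z bs_convex]] _] := dome.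
have bz k : cz (bnth bs k) = 0 by apply/bs_z/bnth_in/(leq_trans _ size3).
have t1b : tverts t1 (bnth bs i) by apply/at_b => //; left.
have t2b : tverts t2 (bnth bs i) by apply/at_b => //; right; left.
have t3b : tverts t3 (bnth bs i) by apply/at_b => //; right; right.
have convex_at_b :
    0 < cross2 (bnth bs i.+1 - bnth bs i) (bnth bs (i + size bs).-1 - bnth bs i).
  have [j_lt j_i j_i1] := prev_index size3 i_lt.
  have -> : bnth bs (i + size bs).-1 = bnth bs ((i + size bs).-1 %% size bs).
    by rewrite /bnth modn_mod.
  exact: bs_convex.
case: orientation => [[a1 a3] | [a1 a3]].
- have q12 : cross2 (bnth bs (i + size bs).-1 - bnth bs i) (bnth bs i.+1 - bnth bs i) != 0.
    by rewrite cross2C oppr_eq0 lt0r_neq0.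
  exact (dome_corner dome (bz i) (bz _) (bz _) q12 wide dt1 dt2 dt3 t1b t2b t3b t12 t23 a1 a3 down).
- rewrite vangleC in wide.
  exact (dome_corner dome (bz i) (bz _) (bz _) (lt0r_neq0 convex_at_b) wide
    dt1 dt2 dt3 t1b t2b t3b t12 t23 a1 a3 down).
Qed.
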